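(* The worst-case total storage cost of the SODA algorithm described in the context is $\frac{n}{n-f}$.
   Context: System model: asynchronous message passing with writers $\mathcal{W}$, readers $\mathcal{R}$ and $n$ servers $\mathcal{S}$ ordered $s_1<\dots<s_n$; reliable point-to-point channels between every client and server and every two servers; crash failures only; any number of clients and at most $f$ servers crash, $1\le f\le (n-1)/2$; executions are well-formed (each client invokes an operation only after its previous one completed). Coding: values of size 1 unit; an $[n,k]$ MDS code with $k=n-f$, encoder $\Phi$ producing $n$ coded elements $\Phi_s(v)$, $s\in\mathcal{S}$, each of size $1/k$; $v$ can be decoded from any $k$ of them. Tags $t=(z,w)$ ($z\in\mathbb{N}$, $w$ a writer id) ordered lexicographically; initial tag $t_0$. In SODA, each server $s$ stores exactly one (tag, coded element) pair $(t,c_s)$ in stable storage, initially $(t_0,\Phi_s(v_0))$, and replaces it with $(t_w,c'_s)$ whenever it delivers, via the write dissemination primitive, a coded element $c'_s=\Phi_s(v)$ with tag $t_w>t$; its other state ($R_c$, a set of registered (reader, tag) pairs, and $H$, a set of (tag, server, reader) triples) consists of metadata only. (Writes: query tags from a majority, choose a new higher tag, disseminate the value so each server obtains its coded element, wait for $k$ acknowledgments. Reads: query tags from a majority, register with servers, which send their stored and subsequently delivered coded elements with tag at least the read's tag, until $k$ elements with a common tag are received and decoded.) Total storage cost: the maximum, over all points of any execution, of the total size of data stored across all servers, normalized by the value size; metadata (tags, ids) and temporary variables are ignored. *)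

From HB Require Import structures.
From mathcomp Require Import all_boot all_order all_algebra.
Set Implicit Arguments. Unset Strict Implicit. Unset Printing Implicit Defensive.
Import GRing.Theory Num.Theory.

Definition tag := (nat * nat)%type.
Definition tag_lt (t1 t2 : tag) : bool :=
  (t1.1 < t2.1) || ((t1.1 == t2.1) && (t1.2 < t2.2)).
Definition tag_le (t1 t2 : tag) : bool := (t1 == t2) || tag_lt t1 t2.
Definition t0 : tag := (0, 0).
Definition max_tag (ts : seq tag) : tag :=
  foldr (fun t acc => if tag_lt acc t then t else acc) t0 ts.

(* operation identifiers: (client id, sequence number of the operation) *)
Definition opid := (nat * nat)%type.

Inductive client := CW of nat | CR of nat.

Definition upd {A : eqType} {B : Type} (g : A -> B) (a : A) (b : B) : A -> B :=
  fun x => if x == a then b else g x.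

Section SODA.
(* n servers 'I_n (s_1 < ... < s_n is 0 < ... < n-1), at most f crash,
   k = n - f, values are vectors of k symbols of a finite field F (size 1),
   coded elements are single symbols (size 1/k), encoder given by a
   generator matrix G of an [n, k] code. *)
Variables (n f : nat) (F : finFieldType) (G : 'M[F]_(n - f, n)) (v0 : 'rV[F]_(n - f)).

Definition value := 'rV[F]_(n - f).
(* Phi_s(v) : the coded element of server s, as data (a sequence of symbols) *)
Definition Phi (v : value) (s : 'I_n) : seq F := [:: (v *m G)%R ord0 s].

Inductive node := NC of client | NS of 'I_n.

Inductive payload :=
  | QueryTag of client & nat
  | TagResp of client & nat & tag
  | MdFull of opid & tag & value
  | MdCoded of opid & tag & seq F
  | Ack of opid & tag
  | ReadValue of opid & tag
  | Coded of opid & tag & seq F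
  | MdMeta of tag & 'I_n & opid.

Record msg := Msg { src : node; dst : node; pl : payload }.

(* server state: [store] is the stable storage (the only data counted);
   everything else is metadata. *)
Record sstate := SState {
  store : seq (tag * seq F);
  Rc : seq (opid * tag);
  Hs : seq (tag * 'I_n * opid);
  mdv : seq opid;                    (* md-value instances already delivered *)
  mdm : seq (tag * 'I_n * opid);     (* md-meta instances already delivered *)
  crashed : bool }.

Inductive wstate :=
  | WIdle of nat
  | WGet of nat & seq ('I_n * tag) & value
  | WPut of nat & tag & seq 'I_n
  | WCrashed.

Inductive rstate :=
  | RIdle of nat
  | RGet of nat & seq ('I_n * tag)
  | RVal of nat & tag & seq ('I_n * tag * seq F)
  | RCrashed.

Record gstate := GState {
  servers : 'I_n -> sstate;
  writers : nat -> wstate;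
  readers : nat -> rstate;
  net : seq msg }.

Definition stored_tag (ss : sstate) : tag := head t0 (map fst (store ss)).
Definition stored_elem (ss : sstate) : seq F := head [::] (map snd (store ss)).

Definition set_store ss st := SState st (Rc ss) (Hs ss) (mdv ss) (mdm ss) (crashed ss).
Definition set_Rc ss r := SState (store ss) r (Hs ss) (mdv ss) (mdm ss) (crashed ss).
Definition set_Hs ss h := SState (store ss) (Rc ss) h (mdv ss) (mdm ss) (crashed ss).
Definition set_mdv ss m := SState (store ss) (Rc ss) (Hs ss) m (mdm ss) (crashed ss).
Definition set_mdm ss m := SState (store ss) (Rc ss) (Hs ss) (mdv ss) m (crashed ss).
Definition set_crashed ss := SState (store ss) (Rc ss) (Hs ss) (mdv ss) (mdm ss) true.

Definition all_servers : seq 'I_n := enum 'I_n.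
Definition first_group (s : 'I_n) : bool := s < f.+1.
Definition majority (ss : seq 'I_n) : bool := n./2 < size (undup ss).
Definition to_servers (from : node) (ss : seq 'I_n) (p : payload) : seq msg :=
  [seq Msg from (NS s) p | s <- ss].

Definition md_meta_send (s : 'I_n) (t : tag) (s' : 'I_n) (rop : opid) : seq msg :=
  to_servers (NS s) [seq x <- all_servers | first_group x] (MdMeta t s' rop).

(* the read rop is known finished when k servers disseminated a common tag *)
Definition finished (h : seq (tag * 'I_n * opid)) (rop : opid) : bool :=
  has (fun x => n - f <= size (undup
        [seq y.1.2 | y <- h & (y.1.1 == x.1.1) && (y.2 == rop)])) h.

Definition deliver (s : 'I_n) (ss : sstate) (wop : opid) (t : tag) (e : seq F)
  : sstate * seq msg :=
  let regs := [seq x <- Rc ss | tag_le x.2 t] in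
  let outs := flatten [seq Msg (NS s) (NC (CR x.1.1)) (Coded x.1 t e)
                           :: md_meta_send s t s x.1 | x <- regs] in
  let ss' := if tag_lt (stored_tag ss) t then set_store ss [:: (t, e)] else ss in
  (ss', outs ++ [:: Msg (NS s) (NC (CW wop.1)) (Ack wop t)]).

Definition client_accepts (st : gstate) (c : client) (p : payload) : bool :=
  match c, p with
  | CW w, TagResp _ i _ => if writers st w is WGet j _ _ then i == j else false
  | CW w, Ack wop t => if writers st w is WPut j t' _ then (wop == (w, j)) && (t == t') else false
  | CR r, TagResp _ i _ => if readers st r is RGet j _ then i == j else false
  | CR r, Coded rop _ _ => if readers st r is RVal j _ _ then rop == (r, j) else false
  | _, _ => false
  end.

Definition setS st s ss := GState (upd (servers st) s ss) (writers st) (readers st).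

Inductive step (st : gstate) : gstate -> Prop :=
  | S_write_invoke w i v :
      writers st w = WIdle i ->
      step st (GState (servers st) (upd (writers st) w (WGet i [::] v)) (readers st)
                 (net st ++ to_servers (NC (CW w)) all_servers (QueryTag (CW w) i)))
  | S_writer_tag n1 n2 s w i t resp v :
      net st = n1 ++ Msg (NS s) (NC (CW w)) (TagResp (CW w) i t) :: n2 ->
      writers st w = WGet i resp v ->
      step st (GState (servers st) (upd (writers st) w (WGet i ((s, t) :: resp) v))
                 (readers st) (n1 ++ n2))
  | S_writer_put w i resp v :
      writers st w = WGet i resp v -> majority (map fst resp) ->
      step st (GState (servers st)
                 (upd (writers st) w (WPut i ((max_tag (map snd resp)).1.+1, w) [::]))
                 (readers st)
                 (net st ++ to_servers (NC (CW w)) [seq x <- all_servers | first_group x]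
                    (MdFull (w, i) ((max_tag (map snd resp)).1.+1, w) v)))
  | S_writer_ack n1 n2 s w i t acks :
      net st = n1 ++ Msg (NS s) (NC (CW w)) (Ack (w, i) t) :: n2 ->
      writers st w = WPut i t acks ->
      step st (GState (servers st) (upd (writers st) w (WPut i t (s :: acks)))
                 (readers st) (n1 ++ n2))
  | S_writer_complete w i t acks :
      writers st w = WPut i t acks -> n - f <= size (undup acks) ->
      step st (GState (servers st) (upd (writers st) w (WIdle i.+1)) (readers st) (net st))
  | S_read_invoke r i :
      readers st r = RIdle i ->
      step st (GState (servers st) (writers st) (upd (readers st) r (RGet i [::]))
                 (net st ++ to_servers (NC (CR r)) all_servers (QueryTag (CR r) i)))
  | S_reader_tag n1 n2 s r i t resp :
      net st = n1 ++ Msg (NS s) (NC (CR r)) (TagResp (CR r) i t) :: n2 ->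
      readers st r = RGet i resp ->
      step st (GState (servers st) (writers st) (upd (readers st) r (RGet i ((s, t) :: resp)))
                 (n1 ++ n2))
  | S_reader_value r i resp :
      readers st r = RGet i resp -> majority (map fst resp) ->
      step st (GState (servers st) (writers st)
                 (upd (readers st) r (RVal i (max_tag (map snd resp)) [::]))
                 (net st ++ to_servers (NC (CR r)) all_servers
                    (ReadValue (r, i) (max_tag (map snd resp)))))
  | S_reader_coded n1 n2 s r i tr t e resp :
      net st = n1 ++ Msg (NS s) (NC (CR r)) (Coded (r, i) t e) :: n2 ->
      readers st r = RVal i tr resp ->
      step st (GState (servers st) (writers st)
                 (upd (readers st) r (RVal i tr ((s, t, e) :: resp))) (n1 ++ n2))
  | S_reader_complete r i tr resp t :
      readers st r = RVal i tr resp ->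
      n - f <= size (undup [seq x.1.1 | x <- resp & x.1.2 == t]) ->
      step st (GState (servers st) (writers st) (upd (readers st) r (RIdle i.+1)) (net st))
  | S_server_query n1 n2 s c i sc :
      net st = n1 ++ Msg sc (NS s) (QueryTag c i) :: n2 ->
      ~~ crashed (servers st s) ->
      step st (GState (servers st) (writers st) (readers st)
                 (n1 ++ n2 ++ [:: Msg (NS s) (NC c) (TagResp c i (stored_tag (servers st s)))]))
  | S_server_mdfull n1 n2 sc s wop t v :
      net st = n1 ++ Msg sc (NS s) (MdFull wop t v) :: n2 ->
      ~~ crashed (servers st s) -> wop \notin mdv (servers st s) ->
      step st (setS st s
                 (deliver s (set_mdv (servers st s) (wop :: mdv (servers st s))) wop t (Phi v s)).1
                 (n1 ++ n2
                  ++ to_servers (NS s) [seq x <- all_servers | first_group x && (x != s)]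
                       (MdFull wop t v)
                  ++ [seq Msg (NS s) (NS x) (MdCoded wop t (Phi v x))
                     | x <- all_servers & ~~ first_group x]
                  ++ (deliver s (set_mdv (servers st s) (wop :: mdv (servers st s)))
                        wop t (Phi v s)).2))
  | S_server_mdfull_dup n1 n2 sc s wop t v :
      net st = n1 ++ Msg sc (NS s) (MdFull wop t v) :: n2 ->
      ~~ crashed (servers st s) -> wop \in mdv (servers st s) ->
      step st (GState (servers st) (writers st) (readers st) (n1 ++ n2))
  | S_server_mdcoded n1 n2 sc s wop t e :
      net st = n1 ++ Msg sc (NS s) (MdCoded wop t e) :: n2 ->
      ~~ crashed (servers st s) -> wop \notin mdv (servers st s) ->
      step st (setS st s
                 (deliver s (set_mdv (servers st s) (wop :: mdv (servers st s))) wop t e).1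
                 (n1 ++ n2 ++
                  (deliver s (set_mdv (servers st s) (wop :: mdv (servers st s))) wop t e).2))
  | S_server_mdcoded_dup n1 n2 sc s wop t e :
      net st = n1 ++ Msg sc (NS s) (MdCoded wop t e) :: n2 ->
      ~~ crashed (servers st s) -> wop \in mdv (servers st s) ->
      step st (GState (servers st) (writers st) (readers st) (n1 ++ n2))
  | S_server_readvalue n1 n2 sc s rop tr :
      net st = n1 ++ Msg sc (NS s) (ReadValue rop tr) :: n2 ->
      ~~ crashed (servers st s) ->
      step st (setS st s
                 (if finished (Hs (servers st s)) rop then servers st s
                  else set_Rc (servers st s) ((rop, tr) :: Rc (servers st s)))
                 (n1 ++ n2 ++
                  (if tag_le tr (stored_tag (servers st s)) then
                     Msg (NS s) (NC (CR rop.1))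
                         (Coded rop (stored_tag (servers st s)) (stored_elem (servers st s)))
                     :: md_meta_send s (stored_tag (servers st s)) s rop
                   else [::])))
  | S_server_mdmeta n1 n2 sc s t s' rop :
      net st = n1 ++ Msg sc (NS s) (MdMeta t s' rop) :: n2 ->
      ~~ crashed (servers st s) -> (t, s', rop) \notin mdm (servers st s) ->
      step st (setS st s
                 (let ss := servers st s in
                  let h := (t, s', rop) :: Hs ss in
                  SState (store ss)
                         (if finished h rop then [seq x <- Rc ss | x.1 != rop] else Rc ss)
                         h (mdv ss) ((t, s', rop) :: mdm ss) (crashed ss))
                 (n1 ++ n2 ++
                  (if first_group s then
                     to_servers (NS s) [seq x <- all_servers | x != s] (MdMeta t s' rop)
                   else [::])))
  | S_server_mdmeta_dup n1 n2 sc s t s' rop :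
      net st = n1 ++ Msg sc (NS s) (MdMeta t s' rop) :: n2 ->
      ~~ crashed (servers st s) -> (t, s', rop) \in mdm (servers st s) ->
      step st (GState (servers st) (writers st) (readers st) (n1 ++ n2))
  | S_server_crash s :
      ~~ crashed (servers st s) ->
      #|[pred x | crashed (servers st x)]| < f ->
      step st (setS st s (set_crashed (servers st s)) (net st))
  | S_writer_crash w :
      step st (GState (servers st) (upd (writers st) w WCrashed) (readers st) (net st))
  | S_reader_crash r :
      step st (GState (servers st) (writers st) (upd (readers st) r RCrashed) (net st))
  | S_client_drop n1 n2 sc c p :
      net st = n1 ++ Msg sc (NC c) p :: n2 -> ~~ client_accepts st c p ->
      step st (GState (servers st) (writers st) (readers st) (n1 ++ n2)).

Definition init : gstate :=
  GState (fun s => SState [:: (t0, Phi v0 s)] [::] [::] [::] [::] false)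
         (fun _ => WIdle 0) (fun _ => RIdle 0) [::].

(* points of executions = reachable global states *)
Inductive reachable : gstate -> Prop :=
  | reach_init : reachable init
  | reach_step st st' : reachable st -> step st st' -> reachable st'.

(* total data stored across all servers (tags/ids ignored), normalized by
   the value size (k = n - f symbols). *)
Definition storage_cost (st : gstate) : rat :=
  ((\sum_(s < n) \sum_(p <- store (servers st s)) size p.2)%:R / (n - f)%N%:R)%R.

Definition worst_case_storage_cost (c : rat) : Prop :=
  (forall st, reachable st -> (storage_cost st <= c)%R) /\
  (exists st, reachable st /\ storage_cost st = c).

End SODA.

Definition is_MDS (n k : nat) (F : finFieldType) (G : 'M[F]_(k, n)) : Prop :=
  forall S : {set 'I_n}, #|S| = k ->
  forall v v' : 'rV[F]_k, (forall s, s \in S -> (v *m G)%R ord0 s = (v' *m G)%R ord0 s) -> v = v'.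

(** A SODA server never accumulates data: delivering a coded element with a
    newer tag replaces its single stored pair.  Moreover every coded element in
    transit is one symbol, of size [1/k], since writers only disseminate
    [Phi_s(v)].  So at every reachable state each of the [n] servers stores
    exactly one symbol, and the total cost is [n / k = n / (n - f)], attained
    already in the initial state. *)

From Pilot Require Import Defs.
From mathcomp Require Import all_boot all_order all_algebra.
Local Open Scope ring_scope.

Lemma all_cat_cons (T : Type) (a : pred T) (s1 s2 : seq T) (x : T) :
  all a (s1 ++ x :: s2) = [&& a x, all a s1 & all a s2].
Proof. by rewrite all_cat /= andbCA. Qed.

Section StorageInvariant.
Variables (n f : nat) (F : finFieldType) (G : 'M[F]_(n - f, n)).

Definition unit_coded_payload (p : payload n f F) : bool :=
  if p is MdCoded _ _ e then size e == 1%N else true.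

Definition unit_coded_msg (m : msg n f F) : bool := unit_coded_payload (pl m).

Definition single_unit_store (ss : sstate n F) : bool :=
  if store ss is [:: (_, e)] then size e == 1%N else false.

Definition soda_inv (st : gstate n f F) : Prop :=
  (forall s, single_unit_store (servers st s)) /\ all unit_coded_msg (net st).

Lemma unit_coded_to_servers from ss p :
  unit_coded_payload p -> all unit_coded_msg (to_servers from ss p).
Proof. by move=> pP; rewrite all_map; apply/allP. Qed.

Lemma unit_coded_md_meta_send s t s' rop :
  all unit_coded_msg (md_meta_send f F s t s' rop).
Proof. exact: unit_coded_to_servers. Qed.

Lemma unit_coded_reader_notifications s t e (regs : seq (opid * Defs.tag)) :
  all unit_coded_msg (flatten [seq Msg (NS s) (NC n (CR x.1.1)) (Coded n f x.1 t e)
                                   :: md_meta_send f F s t s x.1 | x <- regs]).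
Proof.
by elim: regs => //= x regs IH; rewrite all_cat IH unit_coded_md_meta_send.
Qed.

Lemma single_unit_store_deliver s ss wop t e :
  single_unit_store ss -> size e = 1%N ->
  single_unit_store (deliver f s ss wop t e).1.
Proof. by move=> ssP eP; rewrite /deliver /=; case: ifP => _ //; apply/eqP. Qed.

Lemma single_unit_store_upd (g : 'I_n -> sstate n F) s ss :
  (forall x, single_unit_store (g x)) -> single_unit_store ss ->
  forall x, single_unit_store (upd g s ss x).
Proof. by move=> gP ssP x; rewrite /upd; case: ifP. Qed.

Lemma step_unit_coded_net st st' :
  all unit_coded_msg (net st) -> step G st st' -> all unit_coded_msg (net st').
Proof.
move=> netP; case;
  try by move=> * /=; rewrite all_cat netP unit_coded_to_servers.
all: try by move=> * /=.
all: move=> n1 n2 *; match goal with E : net _ = _ |- _ => move: netP; rewrite {}E end.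
all: rewrite all_cat_cons => /and3P[_ P1 P2].
all: rewrite /= !all_cat P1 P2 ?unit_coded_reader_notifications ?andbT //=.
- by rewrite unit_coded_to_servers //= all_map; apply/allP.
- by case: ifP => //= _; rewrite unit_coded_to_servers.
- by case: ifP => // _; rewrite unit_coded_to_servers.
Qed.

Lemma step_single_unit_store st st' :
  soda_inv st -> step G st st' -> forall s, single_unit_store (servers st' s).
Proof.
move=> [storeP netP]; case; try by move=> * /=; apply: storeP.
- move=> n1 n2 sc s wop t v _ _ _.
  apply: single_unit_store_upd => //.
  by apply: single_unit_store_deliver; first exact: (storeP s).
- move=> n1 n2 sc s wop t e netE _ _.
  have /and3P[/eqP eP _ _] : [&& unit_coded_msg (Msg sc (NS s) (MdCoded n f wop t e)),
                                  all unit_coded_msg n1 & all unit_coded_msg n2].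
    by rewrite -all_cat_cons -netE.
  apply: single_unit_store_upd => //.
  by apply: single_unit_store_deliver; first exact: (storeP s).
- move=> n1 n2 sc s rop tr _ _.
  by apply: single_unit_store_upd => //; case: ifP => _; exact: (storeP s).
- move=> n1 n2 sc s t s' rop _ _ _.
  by apply: single_unit_store_upd => //; exact: (storeP s).
- by move=> s _ _; apply: single_unit_store_upd => //; exact: (storeP s).
Qed.

Lemma soda_inv_reachable (v0 : 'rV[F]_(n - f)) st :
  reachable G v0 st -> soda_inv st.
Proof.
elim=> [|st1 st2 _ inv1 step12]; first by split.
split; first exact: step_single_unit_store step12.
by apply: step_unit_coded_net step12; case: inv1.
Qed.

Lemma storage_cost_single_unit (st : gstate n f F) :
  (forall s, single_unit_store (servers st s)) ->
  storage_cost st = n%:R / (n - f)%N%:R.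
Proof.
move=> storeP; rewrite /storage_cost (eq_bigr (fun _ => 1%N)) ?sum1_card ?card_ord //.
move=> s _; move: (storeP s); rewrite /single_unit_store.
by case: (store _) => [|[t e] [|]] //= /eqP eP; rewrite big_seq1.
Qed.

End StorageInvariant.

Theorem theorem5 (n f : nat) (F : finFieldType) (G : 'M[F]_(n - f, n))
    (v0 : 'rV[F]_(n - f)) :
  (1 <= f)%N -> (f <= (n - 1) %/ 2)%N -> is_MDS G ->
  worst_case_storage_cost G v0 (n%:R / (n - f)%N%:R).
Proof.
(* The resilience bound on [f] and the MDS property matter for liveness and
   atomicity, not for the storage count. *)
move=> _ _ _; split.
  by move=> st /soda_inv_reachable[storeP _]; rewrite storage_cost_single_unit.
exists (init G v0); split; first exact: reach_init.
by rewrite storage_cost_single_unit.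
Qed.
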